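(* Let $a\ge 0$ and $i\ge 1$ be integers, and for $j\in\{1,\dots,2i\}$ define $f_a(i,j)=\frac{(a+1)(a+2)\cdots(a+2i)}{a+j}$. Then $$v_2\Big(\sum_{j=1}^{2i}f_a(i,j)\Big)\ge\begin{cases} i-1, & \text{if } 1\le i\le 3,\\ i, & \text{otherwise.}\end{cases}$$
   Context: $v_2$ denotes the $2$-adic valuation. *)

From mathcomp Require Import all_boot.
Set Implicit Arguments. Unset Strict Implicit. Unset Printing Implicit Defensive.

(* f_a(i,j) = ((a+1)(a+2)...(a+2i)) / (a+j); the division is exact for 1 <= j <= 2i. *)
Definition fa (a i j : nat) : nat :=
  (\prod_(1 <= k < (2 * i).+1) (a + k)) %/ (a + j).

Definition v2 (n : nat) : nat := logn 2 n.

From mathcomp Require Import all_boot.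
From mathcomp Require Import zify ring.

Set Implicit Arguments.
Unset Strict Implicit.
Unset Printing Implicit Defensive.

(* Writing P = (a+1)...(a+2i), the sum is e_{2i-1}(a+1, ..., a+2i).  Grouping the
   factors in the pairs (a+l+1, a+2i-l), whose sums all equal c = 2a+2i+1, gives
   e_{2i-1}(a+1, ..., a+2i) = c * e_{i-1}(p_0, ..., p_{i-1}) with p_l the product
   of the l-th pair.  Each p_l is even, since its two factors have opposite
   parities, so 2^(i-1) divides e_{i-1}(p); when i >= 4 the multiples of 4 among
   a+1, ..., a+2i lie in two different pairs, and then every term of e_{i-1}(p)
   contains a factor divisible by 4, which gives 2^i. *)

(* e_{n-1}(s): the sum over j of the product of all entries of s but the j-th. *)
Fixpoint sum_prod_but_one (s : seq nat) : nat :=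
  if s is x :: s' then \prod_(y <- s') y + x * sum_prod_but_one s' else 0.

Lemma sum_prod_but_one_rcons s y :
  sum_prod_but_one (rcons s y) = \prod_(x <- s) x + y * sum_prod_but_one s.
Proof.
elim: s => [|x s IH] /=; first by rewrite big_nil muln0.
by rewrite IH -cats1 big_cat /= !big_cons big_nil; ring.
Qed.

Lemma sum_prod_but_one_pair x s y :
  sum_prod_but_one (x :: rcons s y) =
  (x + y) * \prod_(z <- s) z + x * y * sum_prod_but_one s.
Proof.
by rewrite /= sum_prod_but_one_rcons -cats1 big_cat /= big_cons big_nil; ring.
Qed.

Lemma sum_prod_but_one_gt0 s :
  all (fun x => 0 < x) s -> s != [::] -> 0 < sum_prod_but_one s.
Proof.
case: s => [|x s] //= /andP [_ /allP s_gt0] _.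
by rewrite ltn_addr // big_seq_cond prodn_cond_gt0 // => y /andP [/s_gt0].
Qed.

Lemma sum_divn_prod (f : nat -> nat) (r : seq nat) :
  all (fun j => 0 < f j) r ->
  \sum_(j <- r) (\prod_(k <- r) f k) %/ f j = sum_prod_but_one (map f r).
Proof.
elim: r => [|x r IH] /=; first by rewrite big_nil.
move=> /andP [fx_gt0 fr_gt0].
rewrite !big_cons mulKn // big_map -IH // big_distrr /=.
congr (_ + _); apply: eq_big_seq => j jr.
by rewrite muln_divA // (big_rem j jr) dvdn_mulr.
Qed.

Lemma dvdn_prod_expn d s :
  all (fun x => d %| x) s -> d ^ size s %| \prod_(x <- s) x.
Proof.
elim: s => [|x s IH] /=; first by rewrite big_nil.
by move=> /andP [dx ds]; rewrite big_cons expnS dvdn_mul // IH.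
Qed.

Lemma dvdn_prod_expn_mul d e s :
  all (fun x => d %| x) s -> has (fun x => d * e %| x) s ->
  d ^ size s * e %| \prod_(x <- s) x.
Proof.
elim: s => [|x s IH] //= /andP [dx ds] /orP [dex | des]; rewrite big_cons.
  by rewrite expnS mulnAC dvdn_mul // dvdn_prod_expn.
by rewrite expnS -mulnA dvdn_mul // IH.
Qed.

Lemma dvdn_sum_prod_but_one d s :
  all (fun x => d %| x) s -> d ^ (size s).-1 %| sum_prod_but_one s.
Proof.
elim: s => [|x s IH] //= /andP [dx ds].
case: s IH ds => [|y s] IH ds; first by rewrite /= big_nil.
by rewrite dvdn_add ?dvdn_prod_expn //= expnS dvdn_mul // IH.
Qed.

(* Every term of e_{n-1}(s) keeps one of the two entries divisible by d * e. *)
Lemma dvdn_sum_prod_but_one_mul d e s :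
  all (fun x => d %| x) s -> 1 < count (fun x => d * e %| x) s ->
  d ^ (size s).-1 * e %| sum_prod_but_one s.
Proof.
elim: s => [|x s IH] //= /andP [dx ds] count_de.
have de_s : has (fun x => d * e %| x) s.
  by rewrite has_count; move: count_de; case: (d * e %| x) => /=; lia.
have size_gt0 : 0 < size s by case: (s) de_s.
rewrite dvdn_add ?dvdn_prod_expn_mul // -(prednK size_gt0) expnS.
have [dex | /negbTE dex] := boolP (d * e %| x).
  by rewrite mulnAC dvdn_mul // dvdn_sum_prod_but_one.
by rewrite -mulnA dvdn_mul // IH //; rewrite dex in count_de.
Qed.

Definition pair_prods (a i : nat) : seq nat :=
  [seq (a + l.+1) * (a + 2 * i - l) | l <- iota 0 i].

Lemma pair_prodsS a i :
  pair_prods a i.+1 = a.+1 * (a + 2 * i + 2) :: pair_prods a.+1 i.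
Proof.
rewrite /pair_prods /= (iotaDl 1 0) -map_comp.
congr (_ :: _); first by congr (_ * _); lia.
by apply: eq_map => l /=; congr (_ * _); lia.
Qed.

Lemma iota_double_succ a i :
  iota a.+1 (2 * i.+1) = a.+1 :: rcons (iota a.+2 (2 * i)) (a + 2 * i + 2).
Proof.
rewrite (_ : 2 * i.+1 = (2 * i + 1).+1); last by lia.
by rewrite /= iotaD -cats1 (_ : a.+2 + 2 * i = a + 2 * i + 2) //; lia.
Qed.

Lemma prod_pair_prods a i :
  \prod_(x <- pair_prods a i) x = \prod_(x <- iota a.+1 (2 * i)) x.
Proof.
elim: i a => [|i IH] a; first by rewrite muln0.
by rewrite pair_prodsS iota_double_succ !big_cons IH -cats1 big_cat /= big_seq1; ring.
Qed.

Lemma sum_prod_but_one_iota a i :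
  sum_prod_but_one (iota a.+1 (2 * i)) =
  (2 * a + 2 * i + 1) * sum_prod_but_one (pair_prods a i).
Proof.
elim: i a => [|i IH] a; first by rewrite !muln0.
rewrite iota_double_succ sum_prod_but_one_pair IH pair_prodsS /= prod_pair_prods.
ring.
Qed.

Lemma pair_prods_even a i : all (fun x => 2 %| x) (pair_prods a i).
Proof.
rewrite all_map; apply/allP => l; rewrite mem_iota => /andP [_ l_lt_i] /=.
have [lo_even | lo_odd] := boolP (2 %| a + l.+1); first exact: dvdn_mulr.
by apply: dvdn_mull; lia.
Qed.

(* The multiples of 4 among a+1, ..., a+2i include a + 4 - a %% 4 and
   a + 2i - (a + 2i) %% 4; they cannot be paired together since every pair
   sums to the odd number 2a + 2i + 1. *)
Lemma count_dvd4_pair_prods a i :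
  3 < i -> 1 < count (fun x => 4 %| x) (pair_prods a i).
Proof.
move=> i_gt3; rewrite count_map -size_filter.
set l1 := 3 - a %% 4; set l2 := (a + 2 * i) %% 4.
apply: (@leq_trans (size [:: l1; l2])) => //; apply: uniq_leq_size.
  by rewrite /= inE andbT /l1 /l2; lia.
move=> l; rewrite !inE mem_filter mem_iota /= => /orP [] /eqP ->.
  by rewrite dvdn_mulr /l1; lia.
by rewrite dvdn_mull /l2; lia.
Qed.

Theorem lemma4p3 (a i : nat) (hi : 1 <= i) :
  (if i <= 3 then i - 1 else i) <= v2 (\sum_(1 <= j < (2 * i).+1) fa a i j).
Proof.
rewrite /fa /v2 (@sum_divn_prod (addn a)); last first.
  by apply/allP => j; rewrite mem_index_iota; lia.
have -> : [seq a + j | j <- index_iota 1 (2 * i).+1] = iota a.+1 (2 * i).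
  by rewrite /index_iota subn1 -iotaDl addn1.
have sum_gt0 : 0 < sum_prod_but_one (iota a.+1 (2 * i)).
  apply: sum_prod_but_one_gt0; last by rewrite -size_eq0 size_iota; lia.
  by apply/allP => x; rewrite mem_iota; lia.
rewrite -pfactor_dvdn // sum_prod_but_one_iota; apply: dvdn_mull.
have size_pairs : size (pair_prods a i) = i by rewrite size_map size_iota.
case: ifP => [_ | i_gt3].
  by have := dvdn_sum_prod_but_one (pair_prods_even a i); rewrite size_pairs subn1.
have dvd4_pairs : 1 < count (fun x => 2 * 2 %| x) (pair_prods a i).
  by apply: count_dvd4_pair_prods; lia.
have := dvdn_sum_prod_but_one_mul (pair_prods_even a i) dvd4_pairs.
by rewrite size_pairs -expnSr prednK.
Qed.
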